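(* Let $G$ be a finite group and $\gamma$ a faithful $n$-dimensional complex representation of $G$ whose character $\chi_\gamma$ takes only rational values. Then for every prime $p>2n$, the Sylow $p$-subgroup of $K(\gamma)$ is trivial; i.e., every prime divisor of $|K(\gamma)|$ is at most $2n$.
   Context: Let $G$ be a finite group with irreducible complex characters $\chi_0,\chi_1,\dots,\chi_\ell$, where $\chi_0$ is the trivial character. For a faithful $n$-dimensional complex representation $\gamma$ of $G$ with character $\chi_\gamma$, let $M=(m_{ij})\in\mathbb{Z}^{(\ell+1)\times(\ell+1)}$ be defined by $\chi_\gamma\cdot\chi_i=\sum_{j=0}^{\ell}m_{ij}\chi_j$. The extended McKay–Cartan matrix is $\tilde C:=nI-M$, and the McKay–Cartan matrix $C$ is the $\ell\times\ell$ matrix obtained from $\tilde C$ by deleting the row and column indexed by $\chi_0$. The critical group of $\gamma$ is the finite abelian group $K(\gamma):=\operatorname{coker}(C^t:\mathbb{Z}^\ell\to\mathbb{Z}^\ell)$. *)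

From HB Require Import structures.
From mathcomp Require Import all_boot all_order all_algebra all_fingroup all_solvable all_field all_character.
Set Implicit Arguments. Unset Strict Implicit. Unset Printing Implicit Defensive.
Import Order.TTheory GRing.Theory Num.Theory.
Local Open Scope ring_scope.

Definition mckay_matrix_spec (gT : finGroupType) (G : {group gT})
    (chi : 'CF(G)) (M : 'M[int]_(Nirr G)) : Prop :=
  forall i : Iirr G, chi * 'chi_i = \sum_(j < Nirr G) (M i j)%:~R *: 'chi_j.

Definition ext_mckay_cartan (l n : nat) (M : 'M[int]_l.+1) : 'M[int]_l.+1 :=
  (n%:Z)%:M - M.

(* McKay-Cartan matrix: delete row and column 0 (indexed by the trivial character 'chi_0). *)
Definition mckay_cartan (l n : nat) (M : 'M[int]_l.+1) : 'M[int]_l :=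
  \matrix_(i < l, j < l) ext_mckay_cartan n M (lift ord0 i) (lift ord0 j).

(* Critical group K = coker(C^t : Z^l -> Z^l).  The image of C^t acting on
   column vectors x is {C^t x}, i.e. (transposing) the set of row vectors w *m C.
   An element of Z^l is zero in K iff it lies in this image. *)
Definition in_img_Ct (l : nat) (C : 'M[int]_l) (v : 'rV[int]_l) : Prop :=
  exists w : 'rV[int]_l, v = w *m C.

Definition coker_Ct_sylow_trivial (l : nat) (C : 'M[int]_l) (p : nat) : Prop :=
  forall (v : 'rV[int]_l) (k : nat),
    in_img_Ct C (((p ^ k)%N)%:Z *: v) -> in_img_Ct C v.

(* Put theta := n - chi_gamma: an integral virtual character with integer values, theta(1) = 0,
   theta(g) <> 0 for g <> 1 by faithfulness, and |theta(g)| <= 2n.  Multiplication by theta acts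
   on coordinates over irr G as the extended McKay-Cartan matrix.  If psi vanishes at 1, then
   P(theta) psi = 0 for P(x) = prod_(g <> 1) (theta(g) - x), and writing P(theta) = P(0) - theta h
   gives theta (h psi) = P(0) psi; correcting h psi by a multiple of the regular character (which
   theta kills) removes its trivial coordinate.  Hence P(0) annihilates the critical group, and
   P(0) is prime to every p > 2n. *)
From HB Require Import structures.
From mathcomp Require Import all_boot all_order all_algebra all_fingroup all_solvable all_field all_character.
From mathcomp Require Import ring.
Import Order.TTheory GRing.Theory Num.Theory.
Local Open Scope ring_scope.
Set Implicit Arguments. Unset Strict Implicit.

Lemma absz_floor_bound (R : archiNumDomainType) (x : R) (p : nat) :
  x \is a Num.int -> x != 0 -> `|x| < p%:R -> (0 < `|Num.floor x| < p)%N.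
Proof.
move=> xZ x_neq0 x_ltp; apply/andP; split.
  by rewrite absz_gt0; apply: contraNneq x_neq0 => x0; rewrite -(floorK xZ) x0.
by rewrite -(ltr_nat R) natr_absz intr_norm floorK.
Qed.

Lemma prod_intr_subr (R : comPzRingType) (S : subringClosed R) (I : Type)
    (r : seq I) (P : pred I) (a : I -> int) (t : R) :
  t \in S -> exists2 h, h \in S &
    \prod_(i <- r | P i) ((a i)%:~R - t) = (\prod_(i <- r | P i) a i)%:~R - t * h.
Proof.
move=> St; apply: (big_rec2 (fun y (z : int) => exists2 h, h \in S & y = z%:~R - t * h)).
  by exists 0; rewrite ?rpred0 // mulr0 subr0.
move=> i y z _ [h Sh ->]; exists ((a i)%:~R * h + z%:~R - t * h).
  by rewrite rpredB ?rpredD ?rpredM ?rpred_int.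
by rewrite intrM; ring.
Qed.

Lemma coprime_absz_prod (I : Type) (r : seq I) (P : pred I) (a : I -> int) p :
  prime p -> (forall i, P i -> 0 < `|a i| < p)%N ->
  coprime p `|\prod_(i <- r | P i) a i|.
Proof.
move=> p_pr a_bnd; rewrite (big_morph absz abszM (_ : `|1| = 1)%N) //.
rewrite prime_coprime // Euclid_dvd_prod // big1 // => i Pi.
by case/andP: (a_bnd i Pi) => a_gt0 a_ltp; apply/negbTE; rewrite gtnNdvd.
Qed.

Lemma in_img_Ct_coprime (l : nat) (C : 'M[int]_l) (v : 'rV[int]_l) (a b : int) :
  coprimez a b -> in_img_Ct C (a *: v) -> in_img_Ct C (b *: v) -> in_img_Ct C v.
Proof.
move=> /eqP ab_coprime [wa av] [wb bv]; have [u [u' Bezout_ab]] := Bezoutz a b.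
exists (u *: wa + u' *: wb).
by rewrite mulmxDl -!scalemxAl -av -bv !scalerA -scalerDl Bezout_ab ab_coprime scale1r.
Qed.

Lemma col'0_mulmx (R : pzRingType) (l m : nat) (w : 'rV[R]_l.+1) (A : 'M[R]_(l.+1, m.+1)) :
  w 0 0 = 0 -> col' 0 (w *m A) = col' 0 w *m row' 0 (col' 0 A).
Proof.
move=> w00; apply/rowP => j; rewrite !mxE big_ord_recl w00 mul0r add0r.
by apply: eq_bigr => i _; rewrite !mxE.
Qed.

Lemma mckay_cartanE (l n : nat) (M : 'M[int]_l.+1) :
  mckay_cartan n M = row' 0 (col' 0 (ext_mckay_cartan n M)).
Proof. by apply/matrixP => i j; rewrite !mxE. Qed.

Section IrrCoordinates.

Variables (gT : finGroupType) (G : {group gT}).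

Definition irr_comb (w : 'rV[int]_(Nirr G)) : 'CF(G) := \sum_i (w 0 i)%:~R *: 'chi_i.

Lemma cfdot_irr_comb w i : '[irr_comb w, 'chi_i] = (w 0 i)%:~R.
Proof.
rewrite cfdot_suml (bigD1 i) //= big1 ?addr0 => [|j /negbTE ji].
  by rewrite cfdotZl cfdot_irr eqxx mulr1.
by rewrite cfdotZl cfdot_irr ji mulr0.
Qed.

Lemma vchar_irr_comb phi : phi \in 'Z[irr G]%g -> exists w, phi = irr_comb w.
Proof.
move=> Zphi; exists (\row_i Num.floor '[phi, 'chi_i]).
rewrite [LHS]cfun_sum_cfdot; apply: eq_bigr => i _.
by rewrite mxE floorK // Cint_cfdot_vchar_irr.
Qed.

Lemma mul_irr_comb (chi : 'CF(G)) (M : 'M[int]_(Nirr G)) (n : nat) w :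
  mckay_matrix_spec chi M ->
  (n%:R - chi) * irr_comb w = irr_comb (w *m ext_mckay_cartan n M).
Proof.
move=> HM; rewrite mulr_sumr.
transitivity (\sum_i \sum_j ((w 0 i * ext_mckay_cartan n M i j)%:~R *: 'chi[G]_j)).
  apply: eq_bigr => i _; rewrite -scalerAr mulrBl HM mulr_natl.
  under [RHS]eq_bigr => j _ do rewrite intrM -scalerA.
  rewrite -scaler_sumr; congr (_ *: _).
  under [RHS]eq_bigr => j _ do rewrite !mxE intrB scalerBl.
  rewrite sumrB; congr (_ - _).
  rewrite (bigD1 i) //= big1 ?addr0 => [|j /negbTE ji]; last first.
    by rewrite eq_sym ji mulr0n scale0r.
  by rewrite eqxx mulr1n scaler_nat.
rewrite exchange_big; apply: eq_bigr => j _.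
by rewrite !mxE rmorph_sum scaler_suml.
Qed.

Lemma irr_comb_vchar w : irr_comb w \in 'Z[irr G]%g.
Proof. by rewrite rpred_sum // => i _; rewrite scale_zchar ?intr_int ?irr_vchar. Qed.

Lemma cfdot_cfReg_1 : '[cfReg G, 1] = 1.
Proof.
rewrite cfReg_sum -irr0 cfdot_suml (bigD1 0) //= big1 ?addr0 => [|i /negbTE i0].
  by rewrite cfdotZl cfdot_irr eqxx mulr1 irr0 cfun1E group1.
by rewrite cfdotZl cfdot_irr i0 mulr0.
Qed.

End IrrCoordinates.

Section Annihilator.

Variables (gT : finGroupType) (G : {group gT}) (theta : 'CF(G)).
Hypotheses (Ztheta : theta \in 'Z[irr G]%g) (theta1 : theta 1%g = 0)
  (theta_int : forall g, theta g \is a Num.int).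

Let E := \prod_(g in (G^#)%g) Num.floor (theta g).

Lemma mul_cfReg_theta : theta * cfReg G = 0.
Proof.
apply/cfunP => g; rewrite cfunE cfRegE [RHS]cfunE.
by case: (eqVneq g 1%g) => [->|]; rewrite ?theta1 ?mul0r // mulr0n mulr0.
Qed.

Lemma prod_theta_annihilates (psi : 'CF(G)) : psi 1%g = 0 ->
  (\prod_(g in (G^#)%g) ((Num.floor (theta g))%:~R - theta)) * psi = 0.
Proof.
move=> psi1; apply/cfunP => x; rewrite !cfunE.
case: (boolP (x \in (G^#)%g)) => [Gx | ]; last first.
  by rewrite !inE negb_and negbK => /orP [/eqP -> | /(cfun0 psi) ->]; rewrite ?psi1 mulr0.
rewrite (bigD1 x) //= !cfunE -[_%:~R]scaler_int !cfunE cfun1E.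
by rewrite (subsetP (subsetDl G [set 1%g])) // mulr1 floorK // subrr !mul0r.
Qed.

Lemma theta_annihilator psi : psi \in 'Z[irr G]%g -> psi 1%g = 0 ->
  exists phi, [/\ phi \in 'Z[irr G]%g, '[phi, 1] = 0 & theta * phi = E%:~R *: psi].
Proof.
move=> Zpsi psi1.
have [h Zh prodE] :=
  prod_intr_subr (index_enum _) (mem (G^#)%g) (fun g => Num.floor (theta g)) Ztheta.
have thetaE : theta * (h * psi) = E%:~R *: psi.
  apply/eqP; rewrite mulrA eq_sym -subr_eq0 scaler_int -mulrzl -mulrBl -prodE.
  by rewrite prod_theta_annihilates.
exists (h * psi - '[h * psi, 1] *: cfReg G); split.
- rewrite rpredB ?rpredM // scale_zchar ?char_vchar ?cfReg_char //.
  by rewrite -irr0 Cint_cfdot_vchar_irr ?rpredM.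
- by rewrite cfdotBl cfdotZl cfdot_cfReg_1 mulr1 subrr.
- by rewrite mulrBr -scalerAr mul_cfReg_theta scaler0 subr0.
Qed.

End Annihilator.

Section CharacterValues.

Variables (gT : finGroupType) (G : {group gT}).

Lemma cfun_natrB (chi : 'CF(G)) (n : nat) g :
  g \in G -> (n%:R - chi) g = n%:R - chi g.
Proof. by move=> Gg; rewrite -scaler_nat !cfunE cfun1E Gg mulr1. Qed.

Lemma char_norm_subr_le (chi : 'CF(G)) g :
  chi \is a character -> `|chi 1%g - chi g| <= chi 1%g *+ 2.
Proof.
by move=> Nchi; rewrite mulr2n (le_trans (ler_normB _ _)) // lerD ?char1_ge_norm.
Qed.

Lemma cfRepr_faithful_neq1 (n : nat) (rG : mx_representation algC G n) g :
  mx_faithful rG -> g \in (G^#)%g -> cfRepr rG g != n%:R.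
Proof.
move=> faithful_rG; rewrite !inE => /andP [g_neq1 Gg]; apply: contra g_neq1 => chi_g.
have: g \in cfker (cfRepr rG) by rewrite cfkerEchar ?cfRepr_char // inE Gg cfRepr1.
by rewrite cfker_repr => /(subsetP faithful_rG); rewrite inE.
Qed.

End CharacterValues.

Lemma in_img_mckay_cartan_prod (gT : finGroupType) (G : {group gT})
    (chi : 'CF(G)) (M : 'M[int]_(Nirr G)) (n : nat) (v : 'rV[int]_(Nirr G).-1) :
  mckay_matrix_spec chi M -> chi \is a character -> chi 1%g = n%:R ->
  (forall g, (n%:R - chi) g \is a Num.int) ->
  in_img_Ct (mckay_cartan n M) ((\prod_(g in (G^#)%g) Num.floor ((n%:R - chi) g)) *: v).
Proof.
move=> HM Nchi chi1 theta_int; set theta := n%:R - chi.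
have Ztheta : theta \in 'Z[irr G]%g by rewrite rpredB ?char_vchar ?rpredMn ?cfun1_char.
have theta1 : theta 1%g = 0 by rewrite cfun_natrB // chi1 subrr.
set psi := irr_comb (\row_i oapp (v 0) 0 (unlift 0 i)).
(* Only the coordinate at 'chi_0 changes, so psi0 still has coordinates v off 'chi_0. *)
set psi0 := psi - psi 1%g *: 1.
have Zpsi0 : psi0 \in 'Z[irr G]%g.
  by rewrite rpredB ?irr_comb_vchar // scale_zchar ?Cint_vchar1 ?irr_comb_vchar ?cfun1_vchar.
have psi01 : psi0 1%g = 0 by rewrite !cfunE cfun1E group1 mulr1 subrr.
have [phi [Zphi phi1 thetaE]] := theta_annihilator Ztheta theta1 theta_int Zpsi0 psi01.
have [W phiW] := vchar_irr_comb Zphi; rewrite phiW in phi1 thetaE.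
have W00 : W 0 0 = 0 by apply: (@intr_inj algC); rewrite -cfdot_irr_comb irr0 phi1.
exists (col' 0 W); rewrite mckay_cartanE -col'0_mulmx //.
apply/rowP => j; apply: (@intr_inj algC).
rewrite [in RHS]mxE -cfdot_irr_comb -(mul_irr_comb n _ HM) thetaE.
rewrite cfdotZl cfdotBl cfdotZl -irr0.
by rewrite cfdot_irr (negbTE (neq_lift _ _)) mulr0 subr0 cfdot_irr_comb mxE liftK mxE intrM.
Qed.

Theorem corollary2p4 (gT : finGroupType) (G : {group gT}) (n : nat)
    (rG : mx_representation algC G n)
    (Hfaithful : mx_faithful rG)
    (Hrat : forall g, g \in G -> cfRepr rG g \in Crat)
    (M : 'M[int]_(Nirr G))
    (HM : mckay_matrix_spec (cfRepr rG) M)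
    (p : nat) (Hp : prime p) (Hp2n : (2 * n < p)%N) :
  coker_Ct_sylow_trivial (mckay_cartan n M) p.
Proof.
move=> v k; have Nchi := cfRepr_char rG; have chi1 := cfRepr1 rG.
have theta_int g : (n%:R - cfRepr rG) g \is a Num.int.
  have [Gg | /cfun0 -> //] := boolP (g \in G).
  by rewrite cfun_natrB // rpredB ?rpred_nat // Cint_rat_Aint ?Hrat ?Aint_char.
apply: in_img_Ct_coprime (in_img_mckay_cartan_prod v HM Nchi chi1 theta_int).
rewrite coprimezE /= coprimeXr // coprime_sym coprime_absz_prod // => g G1g.
have Gg : g \in G by case/setD1P: G1g.
apply: absz_floor_bound; rewrite ?theta_int // cfun_natrB //.
  by rewrite subr_eq0 eq_sym cfRepr_faithful_neq1.
by rewrite -chi1 (le_lt_trans (char_norm_subr_le _ Nchi)) // chi1 -mulrnA ltr_nat muln2 -mul2n.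
Qed.
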